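(* Let $q\geq 2$ be an integer and $\mathbf{r}=(r_1,\ldots,r_{q-1})\in\mathbb{N}_0^{q-1}$ with $r_1=\max\mathbf{r}$. Then $\mathscr{W}^{(q)}_{\mathbf{r}}\neq\emptyset$ if and only if both (i) $q\nmid\|\mathbf{r}\|$ and (ii) $\max\mathbf{r}\leq|\mathbf{r}|_q$.
   Context: A composition of $n\in\mathbb{N}_0$ is a finite sequence $\delta=(\delta_1,\ldots,\delta_s)$ of positive integers with $\sum_i\delta_i=n$; write $\ell(\delta)=s$; the unique composition of $0$ is the empty composition. Partial sums: $\delta^+_j=\sum_{i=1}^j\delta_i$. For a positive integer $q$, a composition $\delta$ is called $q'$-cumulative if it is nonempty and $q\nmid\delta^+_j$ for all $1\leq j\leq\ell(\delta)$. For $\mathbf{r}=(r_1,\ldots,r_{q-1})\in\mathbb{N}_0^{q-1}$, let $\mu$ be the partition with exactly $r_i$ parts equal to $i$ for each $1\le i\le q-1$ and no other parts, and let $\mathscr{W}^{(q)}_{\mathbf{r}}$ be the set of $q'$-cumulative compositions that are rearrangements of $\mu$. Define $\|\mathbf{r}\|=\sum_{i=1}^{q-1}ir_i$, $|\mathbf{r}|_q=(q-1)+\sum_{i=2}^{q-1}(q-i)r_i$, and $\max\mathbf{r}=\max\{r_1,\ldots,r_{q-1}\}$. *)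

From mathcomp Require Import all_boot.
Set Implicit Arguments. Unset Strict Implicit. Unset Printing Implicit Defensive.

(* A vector r = (r_1,...,r_{q-1}) in N_0^{q-1} is represented as a sequence
   [:: r_1; ...; r_{q-1}] of size q-1; r_i = nth 0 r i.-1 for 1 <= i <= q-1. *)
Definition rcomp (r : seq nat) (i : nat) : nat := nth 0 r i.-1.

Definition is_composition (d : seq nat) : bool := all (fun x => 0 < x) d.

Definition psum (d : seq nat) (j : nat) : nat := sumn (take j d).

Definition q_cumulative (q : nat) (d : seq nat) : bool :=
  [&& is_composition d, d != [::] &
      all (fun j => ~~ (q %| psum d j)) (iota 1 (size d))].

Definition mu_of (q : nat) (r : seq nat) : seq nat :=
  flatten [seq nseq (rcomp r i) i | i <- iota 1 q.-1].

Definition inW (q : nat) (r : seq nat) (d : seq nat) : Prop :=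
  q_cumulative q d /\ perm_eq d (mu_of q r).

Definition W_nonempty (q : nat) (r : seq nat) : Prop := exists d, inW q r d.

Definition rnorm (q : nat) (r : seq nat) : nat := \sum_(1 <= i < q) i * rcomp r i.

Definition rabsq (q : nat) (r : seq nat) : nat :=
  (q - 1) + \sum_(2 <= i < q) (q - i) * rcomp r i.

Definition rmax (q : nat) (r : seq nat) : nat := \max_(1 <= i < q) rcomp r i.

From mathcomp Require Import all_boot zify.
Set Implicit Arguments. Unset Strict Implicit.

(* For a running total x, let gap x in
   [1, q] be the distance from x to the next multiple of q: appending a part e
   keeps the partial sums off the multiples of q iff e <> gap x.  Give a part i
   the weight q - i when i >= 2 and weight 0 when i = 1; the total weight of
   the multiset mu_of q r is exactly |r|_q - (q - 1).
   - Necessity is a potential argument: along an admissible ordering,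
     (number of 1s used) + gap (current total) never exceeds
     gap (starting total) + (weight used); starting from 0 this yields
     r_1 <= |r|_q, and the full sum ||r|| must avoid the multiples of q.
   - Sufficiency is a greedy construction.  An invariant [feasible x m] on the
     running total x and the multiset m of unused parts is preserved by some
     admissible choice of the next part (a part above the gap, a part 1, or a
     part as frequent as 1), so the whole multiset can be laid out. *)

Section Cumulative.
Variable q : nat.
Hypothesis hq : 1 < q.

Definition ispart (j : nat) : bool := 0 < j < q.

Lemma ltn_modq x : x %% q < q.
Proof. by apply: ltn_pmod; lia. Qed.

Lemma modnD_lt x e : e < q ->
  (x + e) %% q = if x %% q + e < q then x %% q + e else x %% q + e - q.
Proof.
move=> he; rewrite -modnDml; case: ifP => h; first by rewrite modn_small.
have hs := ltn_modq x.
rewrite -{1}[x %% q + e](@subnK q); last by lia.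
by rewrite modnDr modn_small; lia.
Qed.

Definition gap (x : nat) : nat := q - x %% q.

Lemma gap_gt0 x : 0 < gap x.
Proof. by have := ltn_modq x; rewrite /gap; lia. Qed.

Lemma gap_leq x : gap x <= q.
Proof. by rewrite /gap leq_subr. Qed.

Lemma gap0 : gap 0 = q.
Proof. by rewrite /gap mod0n subn0. Qed.

Lemma dvdn_add_gap x e : 0 < e < q -> (q %| x + e) = (e == gap x).
Proof.
case/andP=> e0 eq; have hs := ltn_modq x.
by rewrite /dvdn modnD_lt // /gap; case: ifP => h; apply/eqP/eqP; lia.
Qed.

Lemma gap_add_lt x e : e < gap x -> gap (x + e) = gap x - e.
Proof.
move=> he; have hs := ltn_modq x; have eq : e < q by have := gap_leq x; lia.
by move: he; rewrite /gap modnD_lt //; case: ifP; lia.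
Qed.

Lemma gap_add_gt x e : gap x < e < q -> gap (x + e) = gap x + q - e.
Proof.
case/andP=> he eq; have hs := ltn_modq x.
by move: he; rewrite /gap modnD_lt //; case: ifP; lia.
Qed.

Lemma dvdn_add_mul_gap x c : (c == 1) || (gap x == q) -> q %| x + c * gap x.
Proof.
case/orP=> [/eqP-> | /eqP hg].
  apply/dvdnP; exists (x %/ q).+1; rewrite {1}(divn_eq x q) /gap.
  by have := ltn_modq x; move: (x %/ q) (x %% q) => k s; nia.
have hx : q %| x by rewrite /dvdn; apply/eqP; move: hg; rewrite /gap; have := ltn_modq x; lia.
by rewrite hg dvdn_addl ?dvdn_mull.
Qed.

Definition weight (i : nat) : nat := if 1 < i then q - i else 0.
Definition wsum (s : seq nat) : nat := sumn (map weight s).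

Lemma gap_weight x e : 0 < e < q -> e != gap x ->
  (e == 1) + gap (x + e) <= gap x + weight e.
Proof.
move=> /andP[e0 eq] /eqP hne; have hg := gap_gt0 x; rewrite /weight.
case: (ltngtP e (gap x)) => [lt|gt|//].
  by rewrite gap_add_lt //; case: ifP; case: (e =P 1); lia.
by rewrite gap_add_gt ?gt // ifT; case: (e =P 1); lia.
Qed.

Fixpoint avoids (x : nat) (l : seq nat) : bool :=
  if l is e :: l' then ~~ (q %| x + e) && avoids (x + e) l' else true.

Lemma avoidsE x l :
  avoids x l = all (fun j => ~~ (q %| x + psum l j)) (iota 1 (size l)).
Proof.
elim: l x => [|e l IH] x //=.
rewrite /psum /= take0 addn0 IH (iotaDl 1 1) all_map; congr (_ && _).
by apply: eq_all => j /=; rewrite /psum /= addnA.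
Qed.

Lemma potential x l : all ispart l -> avoids x l ->
  count_mem 1 l + gap (x + sumn l) <= gap x + wsum l.
Proof.
elim: l x => [|e l IH] x /=; first by rewrite !addn0.
move=> /andP[he hl] /andP[hd hv]; rewrite dvdn_add_gap // in hd.
have := IH (x + e) hl hv; have := gap_weight he hd; rewrite /wsum /= addnA; lia.
Qed.

Lemma cumulative_necessary d : all ispart d -> q_cumulative q d ->
  ~~ (q %| sumn d) /\ count_mem 1 d <= q - 1 + wsum d.
Proof.
move=> hd /and3P[_ hne hall]; split.
  have hin : size d \in iota 1 (size d).
    by rewrite mem_iota add1n ltnSn lt0n size_eq0 hne.
  by have := allP hall _ hin; rewrite /psum take_size.
have hav : avoids 0 d by rewrite avoidsE; apply: sub_all hall => j; rewrite add0n.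
have := potential hd hav.
by rewrite gap0 add0n; have := gap_gt0 (sumn d); lia.
Qed.

Definition feasible (x : nat) (m : seq nat) : Prop :=
  [/\ ~~ (q %| x + sumn m), count_mem 1 m < gap x + wsum m &
      forall i, 1 < i -> count_mem i m <= count_mem 1 m + (i == (gap x).+1)].

Lemma rem_stats e m : e \in m ->
  [/\ forall i, count_mem i m = (e == i) + count_mem i (rem e m),
      sumn m = e + sumn (rem e m) & wsum m = weight e + wsum (rem e m)].
Proof.
move=> he; have hp := perm_to_rem he; split.
- by move=> i; rewrite (permP hp).
- by rewrite (perm_sumn hp).
- by rewrite /wsum (perm_sumn (perm_map weight hp)).
Qed.
Lemma far_move x m e : feasible x m -> e \in m -> gap x < e < q ->
  (forall i, 1 < i -> i != e -> count_mem i m <= count_mem 1 m) ->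
  feasible (x + e) (rem e m).
Proof.
case=> hdiv hone htight he /andP[hge heq] hothers.
have [hc hs hw] := rem_stats he; have hg := gap_gt0 x.
have hgap := gap_add_gt (introT andP (conj hge heq)).
have he1 : (e == 1) = false by apply/eqP; lia.
have hwe : weight e = q - e by rewrite /weight ifT //; lia.
have hc1 : count_mem 1 (rem e m) = count_mem 1 m by rewrite (hc 1) he1.
split.
- by rewrite -addnA -hs.
- by move: hone; rewrite hgap hc1 hw hwe; lia.
move=> i hi; rewrite hc1.
case: (eqVneq e i) => [ei | hei]; first subst i.
  by have := htight e hi; rewrite hc eqxx; case: (e == (gap x).+1); lia.
have := hothers i hi; rewrite (hc i) (negbTE hei) eq_sym hei => /(_ isT); lia.
Qed.

Lemma near_move_one x m : feasible x m -> 1 \in m -> 1 < gap x ->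
  (forall i, 1 < i -> count_mem i m + (i != gap x) <= count_mem 1 m) ->
  feasible (x + 1) (rem 1 m).
Proof.
case=> hdiv hone _ h1 hg hsmaller.
have [hc hs hw] := rem_stats h1.
have hgap : (gap (x + 1)).+1 = gap x by rewrite gap_add_lt //; lia.
have hc1 := hc 1; rewrite eqxx in hc1.
split.
- by rewrite -addnA -hs.
- by move: hone; rewrite -hgap hw hc1 /weight /=; lia.
move=> i hi; have := hsmaller i hi; rewrite (hc i) hgap.
have -> : (1 == i) = false by apply/eqP; lia.
by case: (eqVneq i (gap x)); lia.
Qed.

Lemma sumn_map_split (f : nat -> nat) j s :
  sumn (map f s) = count_mem j s * f j + sumn (map f (filter (predC1 j) s)).
Proof.
elim: s => [|k s IH] //=; rewrite IH.
by case: (eqVneq k j) => [->|hkj] /=; rewrite ?mulSn; lia.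
Qed.

Lemma weightless_ones s : all ispart s -> wsum s = 0 -> sumn s = count_mem 1 s.
Proof.
elim: s => [|k s IH] //= /andP[/andP[k0 kq] hs].
rewrite /wsum /= -/(wsum s) /weight; case: ifP => hk hw; first by lia.
have -> : k = 1 by lia.
by rewrite IH //; lia.
Qed.

(* If some part 1 < j < gap x is as frequent as 1, the weight is large: the
   only tight configuration (m made of c copies of gap x - 1 and c copies of
   1) would sum to c * gap x, which the first clause of the invariant excludes. *)
Lemma wsum_lower x m j : all ispart m -> ~~ (q %| x + sumn m) ->
  1 < j < gap x -> count_mem j m = count_mem 1 m -> 0 < count_mem 1 m ->
  count_mem 1 m + q < gap x + wsum m.
Proof.
move=> hm hdiv /andP[hj1 hjg] hcj hc.
set c := count_mem 1 m in hcj hc *; set rest := filter (predC1 j) m.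
have hgq := gap_leq x.
have hwj : weight j = q - j by rewrite /weight hj1.
have hw : wsum m = c * (q - j) + wsum rest by rewrite /wsum (sumn_map_split _ j) hcj hwj.
rewrite hw; case: (posnP (wsum rest)) => hR; last nia.
case: (ltnP j.+1 (gap x)) => hjg'; first nia.
have hsum : sumn m = c * gap x.
  have hrest : sumn rest = c.
    rewrite weightless_ones //; last first.
      by apply/allP => k; rewrite mem_filter => /andP[_ /(allP hm)].
    rewrite /rest count_filter /c.
    apply: eq_count => k /=; case: (eqVneq k 1) => // ->.
    by rewrite /= neq_ltn hj1.
  have := sumn_map_split id j m; rewrite !map_id hcj -/rest hrest => ->.
  have -> : gap x = j.+1 by lia.
  by rewrite mulnS addnC.
have : ~~ ((c == 1) || (gap x == q)).
  by apply: contra hdiv; rewrite hsum; exact: dvdn_add_mul_gap.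
case/norP=> /eqP hc1 /eqP hgq'; nia.
Qed.

Lemma near_move_big x m j : all ispart m -> feasible x m -> 1 < j < gap x ->
  count_mem j m = count_mem 1 m -> 0 < count_mem 1 m ->
  (forall i, 1 < i -> count_mem i m <= count_mem 1 m) ->
  feasible (x + j) (rem j m).
Proof.
move=> hm hfeas hj hcj hc hle; case: hfeas => hdiv _ _.
have hlow := wsum_lower hm hdiv hj hcj hc.
case/andP: hj => hj1 hjg.
have hjm : j \in m by rewrite -has_pred1 has_count hcj.
have [hcnt hs hw] := rem_stats hjm.
have hgap : gap (x + j) = gap x - j by apply: gap_add_lt.
have hc1 : count_mem 1 (rem j m) = count_mem 1 m by rewrite (hcnt 1); case: eqP; lia.
have hwj : weight j = q - j by rewrite /weight hj1.
split.
- by rewrite -addnA -hs.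
- by move: hlow; rewrite hgap hc1 hw hwj; have := gap_leq x; lia.
move=> i hi; have := hle i hi; rewrite hc1 (hcnt i); lia.
Qed.

(* The greedy choice when no part exceeds the gap and no part outnumbers 1:
   a part tying with 1 if there is one, and a 1 otherwise. *)
Lemma step_small x m : all ispart m -> m != [::] -> feasible x m ->
  (forall j, j \in m -> j <= gap x) ->
  (forall i, 1 < i -> count_mem i m <= count_mem 1 m) ->
  exists e, [/\ e \in m, e != gap x & feasible (x + e) (rem e m)].
Proof.
move=> hm m0 hfeas hsmall hle; have [_ hone _] := hfeas.
have hc : 0 < count_mem 1 m.
  have hj0 : nth 0 m 0 \in m by rewrite mem_nth // lt0n size_eq0.
  have hcj0 : 0 < count_mem (nth 0 m 0) m by rewrite -has_count has_pred1.
  move: (allP hm _ hj0) hcj0; rewrite /ispart.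
  case: (ltnP 1 (nth 0 m 0)) => [/hle | hj1 hpart]; first by lia.
  by have -> : nth 0 m 0 = 1 by lia.
case: (boolP (has (fun j => [&& 1 < j, j != gap x & count_mem 1 m <= count_mem j m]) m)).
  case/hasP=> j hj /and3P[hj1 /eqP hjg hcj]; exists j; split => //; first exact/eqP.
  apply: near_move_big => //; first by have := hsmall j hj; rewrite hj1; lia.
  by apply/eqP; rewrite eqn_leq hcj hle.
move/hasPn=> hnone.
have h1m : 1 \in m by rewrite -has_pred1 has_count.
have hg1 : 1 < gap x.
  rewrite ltnNge; apply/negP => hg.
  have hw0 : wsum m = 0.
    rewrite /wsum sumnE big_map big1_seq // => j /andP[_ hj].
    by rewrite /weight ifN //; have := hsmall j hj; lia.
  by move: hone; rewrite hw0; lia.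
exists 1; split => //; first by rewrite neq_ltn hg1.
apply: near_move_one => // i hi.
case: (boolP (i \in m)) => him; last by rewrite (count_memPn him); case: (i != gap x); lia.
have := hnone i him; rewrite hi /=.
case: (eqVneq i (gap x)) => _ /=; last by rewrite -ltnNge addn1.
by rewrite addn0 (hle i hi).
Qed.

Lemma feasible_step x m : all ispart m -> m != [::] -> feasible x m ->
  exists e, [/\ e \in m, e != gap x & feasible (x + e) (rem e m)].
Proof.
move=> hm m0 hfeas; have [_ _ htight] := hfeas.
have hpart j : j \in m -> 0 < j < q by move/(allP hm).
case: (ltnP (count_mem 1 m) (count_mem (gap x).+1 m)) => [hover | hnot].
  have he : (gap x).+1 \in m by rewrite -has_pred1 has_count; lia.
  exists (gap x).+1; split => //; first by rewrite neq_ltn ltnSn orbT.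
  apply: far_move => //; first by rewrite ltnSn; have := hpart _ he; lia.
  by move=> i hi /negbTE hne; have := htight i hi; rewrite hne addn0.
have hle i : 1 < i -> count_mem i m <= count_mem 1 m.
  by move=> hi; have := htight i hi; case: eqVneq => [->|_]; lia.
case: (boolP (has (fun e => gap x < e) m)) => [/hasP[e he hge] | /hasPn hsmall].
  exists e; split => //; first by rewrite neq_ltn hge orbT.
  apply: far_move => //; first by rewrite hge; have := hpart e he; lia.
  by move=> i hi _; exact: hle.
by apply: step_small => // j /hsmall; rewrite -leqNgt.
Qed.

Lemma feasible_arrangement x m : all ispart m -> feasible x m ->
  exists2 d, perm_eq d m & avoids x d.
Proof.
have [n] := ubnP (size m); elim: n m x => // n IH m x hsz hm hfeas.
case: (eqVneq m [::]) => [-> | m0]; first by exists [::].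
have [e [he hd hfeas']] := feasible_step hm m0 hfeas.
have hp := perm_to_rem he.
have hm' : all ispart (rem e m) by move: hm; rewrite (perm_all _ hp) => /andP[].
have hsz' : size (rem e m) < n.
  by rewrite size_rem // -ltnS prednK // lt0n size_eq0.
have [d hpd hav] := IH _ _ hsz' hm' hfeas'.
exists (e :: d); last by rewrite /= dvdn_add_gap ?hd ?hav //; exact: (allP hm).
by rewrite perm_sym (perm_trans hp) // perm_cons perm_sym.
Qed.

Theorem cumulative_rearrangement m : all ispart m ->
  (forall i, 1 < i -> count_mem i m <= count_mem 1 m) ->
  (exists2 d, perm_eq d m & q_cumulative q d) <->
  ~~ (q %| sumn m) /\ count_mem 1 m <= q - 1 + wsum m.
Proof.
move=> hm hdom; split.
  case=> d hp hd; have hpd : all ispart d by rewrite (perm_all _ hp).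
  rewrite -(perm_sumn hp) -(permP hp) /wsum -(perm_sumn (perm_map weight hp)).
  exact: cumulative_necessary.
case=> hdiv hone.
have hfeas : feasible 0 m.
  split; rewrite ?add0n ?gap0 //; first lia.
  by move=> i hi; rewrite (leq_trans (hdom i hi)) ?leq_addr.
have [d hp hav] := feasible_arrangement hm hfeas.
have hpd : all ispart d by rewrite (perm_all _ hp).
exists d => //; apply/and3P; split.
- by apply: sub_all hpd => j /andP[].
- by apply: contraNneq hdiv => hd0; rewrite -(perm_sumn hp) hd0.
- by move: hav; rewrite avoidsE; apply: sub_all => j; rewrite add0n.
Qed.

Lemma sumn_map_mu r (f : nat -> nat) :
  sumn (map f (mu_of q r)) = \sum_(1 <= i < q) rcomp r i * f i.
Proof.
rewrite /mu_of map_flatten sumn_flatten -map_comp sumnE big_map /index_iota subn1.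
by rewrite big_map; apply: eq_bigr => i _ /=; rewrite map_nseq sumn_nseq mulnC.
Qed.

Lemma mu_ispart r : all ispart (mu_of q r).
Proof.
apply/allP => j /flatten_mapP[i hi]; rewrite mem_nseq => /andP[_ /eqP->].
by move: hi; rewrite mem_iota /ispart; lia.
Qed.

Lemma count_mu r j : count_mem j (mu_of q r) = if 0 < j < q then rcomp r j else 0.
Proof.
rewrite -sumn_count sumn_map_mu; case: ifP => hj.
  rewrite (bigD1_seq j) ?mem_index_iota ?iota_uniq //= eqxx muln1.
  by rewrite big1_seq ?addn0 // => i /andP[hij _] /=; rewrite (negbTE hij) muln0.
rewrite big1_seq // => i /andP[_]; rewrite mem_index_iota /= => hi.
case: (eqVneq i j) => [ij|_]; last exact: muln0.
by subst i; rewrite hi in hj.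
Qed.

Lemma sumn_mu r : sumn (mu_of q r) = rnorm q r.
Proof.
have := sumn_map_mu r id; rewrite map_id => ->; rewrite /rnorm.
by apply: eq_bigr => i _; rewrite mulnC.
Qed.

Lemma wsum_mu r : wsum (mu_of q r) = \sum_(2 <= i < q) (q - i) * rcomp r i.
Proof.
rewrite /wsum sumn_map_mu big_ltn // (_ : weight 1 = 0) // muln0 add0n.
by apply: eq_big_nat => i hi; rewrite /weight ifT; [exact: mulnC | lia].
Qed.

End Cumulative.

(* Main theorem: with r_1 = max r, no part outnumbers the 1s in mu_of q r, and
   the multiset statistics turn the two conditions into (i) and (ii). *)
Theorem lemma1 (q : nat) (r : seq nat) (hq : 2 <= q) (hsize : size r = q - 1)
  (hmax : rcomp r 1 = rmax q r) :
  W_nonempty q r <-> (~~ (q %| rnorm q r) /\ rmax q r <= rabsq q r).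
Proof.
have hone : count_mem 1 (mu_of q r) = rmax q r by rewrite count_mu ifT.
have hdom i : 1 < i -> count_mem i (mu_of q r) <= count_mem 1 (mu_of q r).
  move=> hi; rewrite hone count_mu; case: ifP => // /andP[_ hiq].
  by apply: leq_bigmax_seq; rewrite // mem_index_iota (ltnW hi) hiq.
have := cumulative_rearrangement hq (mu_ispart hq r) hdom.
rewrite sumn_mu hone (wsum_mu hq) -/(rabsq q r) => <-.
by split=> [[d [hd hp]] | [d hp hd]]; exists d.
Qed.
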